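(* If $G$ and $H$ are infinite, connected, locally finite graphs, then $\beta(G\,\Box\, H)=\infty$.
   Context: The cartesian product $G\Box H$ has vertex set $V(G)\times V(H)$, where $(a,v)$ is adjacent to $(b,w)$ iff either $a=b$ and $vw\in E(H)$, or $v=w$ and $ab\in E(G)$. $d$ denotes shortest-path distance. A vertex $x$ resolves $u,v$ if $d(u,x)\ne d(v,x)$; a set of vertices is a resolving set if every pair of distinct vertices is resolved by some vertex of it. The metric dimension $\beta$ is the minimum cardinality of a resolving set if a finite one exists, and $\infty$ otherwise. *)

From Stdlib Require Import List Arith.
Import ListNotations.
Set Implicit Arguments.

Section Graphs.
Variable V : Type.
Variable adj : V -> V -> Prop.

Definition simple_graph : Prop :=
  (forall u v, adj u v -> adj v u) /\ (forall u, ~ adj u u).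

Inductive walk : nat -> V -> V -> Prop :=
| walk0 : forall u, walk 0 u u
| walkS : forall n u w v, adj u w -> walk n w v -> walk (S n) u v.

Definition dist (u v : V) (n : nat) : Prop :=
  walk n u v /\ forall m, walk m u v -> n <= m.

Definition connected : Prop := forall u v, exists n, walk n u v.

Definition locally_finite : Prop :=
  forall v, exists l : list V, forall w, adj v w -> In w l.

Definition infinite_graph : Prop := forall l : list V, exists v, ~ In v l.

Definition resolves (x u v : V) : Prop :=
  ~ (exists n, dist u x n /\ dist v x n).

Definition resolving_set (S : list V) : Prop :=
  forall u v, u <> v -> exists x, In x S /\ resolves x u v.

Definition metric_dim_infinite : Prop :=
  forall S : list V, ~ resolving_set S.
End Graphs.

Definition box {V W : Type} (adjG : V -> V -> Prop) (adjH : W -> W -> Prop)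
  (p q : V * W) : Prop :=
  (fst p = fst q /\ adjH (snd p) (snd q)) \/ (snd p = snd q /\ adjG (fst p) (fst q)).

(* Call an edge a1 a2 of G "receding" from a finite set A when
   d(a1,x) = d(a2,x) + 1 for every x in A.  Such an edge always exists: fix a
   base vertex x0 and consider the potential P(z) = sum_{x in A} d(z,x).  If
   no edge recedes from A, then along a geodesic from x0 each step raises P by
   at most |A| - 1, so P(z) + d(x0,z) <= P(x0) + |A| d(x0,z); the triangle
   inequality gives P(z) + P(x0) >= |A| d(x0,z), hence d(x0,z) <= 2 P(x0).
   Infinity and local finiteness provide vertices arbitrarily far from x0
   (balls are finite), a contradiction.

   Given a finite set S in G [] H, take an edge a1 a2 of G receding from the
   first coordinates of S and an edge b1 b2 of H receding from the second
   ones.  Since d((a,b),(x,y)) = d_G(a,x) + d_H(b,y), the distinct vertices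
   (a1,b2) and (a2,b1) are at equal distance from every vertex of S, so S is
   not resolving. *)

From Stdlib Require Import List Arith Lia Classical ClassicalEpsilon.
Import ListNotations.
Set Implicit Arguments.

Section Walks.
Variable V : Type.
Variable adj : V -> V -> Prop.

Lemma walk_app n u w m v :
  walk adj n u w -> walk adj m w v -> walk adj (n + m) u v.
Proof.
  induction 1 as [|n u w' w Huw _ IH]; intros Hwv; simpl; [exact Hwv|].
  eapply walkS; eauto.
Qed.

Lemma walk_snoc n u w v : walk adj n u w -> adj w v -> walk adj (S n) u v.
Proof.
  intros Huw Hwv. rewrite <- Nat.add_1_r.
  eapply walk_app; eauto. eapply walkS; eauto. constructor.
Qed.

Lemma walk_last n u v :
  walk adj (S n) u v -> exists w, walk adj n u w /\ adj w v.
Proof.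
  revert u. induction n as [|n IH]; intros u H; inversion H; subst.
  - inversion H2; subst. exists u. split; [constructor | assumption].
  - destruct (IH _ H2) as [w' [Hw Hw']]. exists w'. split; [eapply walkS|]; eauto.
Qed.

Lemma walk0_eq u v : walk adj 0 u v -> u = v.
Proof. intro H; inversion H; reflexivity. Qed.

Lemma walk_rev (sym : forall u v, adj u v -> adj v u) n u v :
  walk adj n u v -> walk adj n v u.
Proof.
  induction 1; [constructor | eapply walk_snoc; eauto].
Qed.

End Walks.

Lemma least_witness (P : nat -> Prop) :
  (exists n, P n) -> exists n, P n /\ forall m, P m -> n <= m.
Proof.
  intros [n Hn]. induction n as [n IH] using lt_wf_ind.
  destruct (classic (exists m, m < n /\ P m)) as [[m [Hmn Hm]] | Hno].
  - exact (IH m Hmn Hm).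
  - exists n. split; [exact Hn|]. intros m Hm.
    destruct (le_lt_dec n m) as [|Hlt]; [assumption|].
    exfalso. apply Hno. eauto.
Qed.

Section Metric.
Variable V : Type.
Variable adj : V -> V -> Prop.
Hypothesis conn : connected adj.

Definition gdist (u v : V) : nat := epsilon (inhabits 0) (fun n => dist adj u v n).

Lemma gdist_spec u v : dist adj u v (gdist u v).
Proof. unfold gdist. apply epsilon_spec, least_witness, conn. Qed.

Lemma gdist_walk u v : walk adj (gdist u v) u v.
Proof. apply gdist_spec. Qed.

Lemma gdist_le u v n : walk adj n u v -> gdist u v <= n.
Proof. apply gdist_spec. Qed.

Lemma gdist_triangle u w v : gdist u v <= gdist u w + gdist w v.
Proof. apply gdist_le, walk_app with w; apply gdist_walk. Qed.

Lemma gdist_adj u w v : adj u w -> gdist u v <= S (gdist w v).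
Proof. intros H. apply gdist_le. eapply walkS; [exact H | apply gdist_walk]. Qed.

Lemma gdist_sym (sym : forall u v, adj u v -> adj v u) u v : gdist u v = gdist v u.
Proof.
  apply Nat.le_antisymm; apply gdist_le, walk_rev; auto; apply gdist_walk.
Qed.

Lemma geodesic_predecessor x0 z N :
  gdist x0 z = S N -> exists w, adj w z /\ gdist x0 w = N.
Proof.
  intros Hz. pose proof (gdist_walk x0 z) as Hw. rewrite Hz in Hw.
  destruct (walk_last Hw) as [w [Hw0 Hwz]]. exists w. split; [exact Hwz|].
  apply Nat.le_antisymm; [exact (gdist_le Hw0)|].
  assert (gdist w z <= 1) by (apply gdist_le; eapply walkS; [exact Hwz | constructor]).
  pose proof (gdist_triangle x0 w z). lia.
Qed.

End Metric.

Section Balls.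
Variable V : Type.
Variable adj : V -> V -> Prop.
Hypothesis lf : locally_finite adj.

Lemma neighbourhood_finite (l : list V) :
  exists L, forall v w, In v l -> adj v w -> In w L.
Proof.
  induction l as [|a l [L HL]]; [exists []; intros v w []|].
  destruct (lf a) as [la Ha]. exists (la ++ L).
  intros v w [<- | Hv] Hvw; apply in_or_app; eauto.
Qed.

Lemma ball_finite x0 K :
  exists l, forall v n, n <= K -> walk adj n x0 v -> In v l.
Proof.
  induction K as [|K [l Hl]].
  - exists [x0]. intros v n Hn Hw. replace n with 0 in Hw by lia.
    left. exact (walk0_eq Hw).
  - destruct (neighbourhood_finite l) as [L HL]. exists (l ++ L).
    intros v n Hn Hw. apply in_or_app.
    destruct (le_lt_dec n K) as [HnK|]; [left; eauto|].
    replace n with (S K) in Hw by lia.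
    destruct (walk_last Hw) as [w [Hw0 Hwv]]. right. eapply HL; eauto.
Qed.

Lemma far_vertex (inf : infinite_graph V) (conn : connected adj) x0 K :
  exists z, K < gdist adj x0 z.
Proof.
  destruct (ball_finite x0 K) as [l Hl]. destruct (inf l) as [z Hz].
  exists z. destruct (le_lt_dec (gdist adj x0 z) K) as [Hle|]; [|assumption].
  exfalso. apply Hz. eapply Hl; [exact Hle | apply gdist_walk, conn].
Qed.

End Balls.

Fixpoint sum_over {V : Type} (f : V -> nat) (l : list V) : nat :=
  match l with [] => 0 | x :: l => f x + sum_over f l end.

Lemma sum_over_add {V : Type} (f g : V -> nat) l :
  sum_over (fun x => f x + g x) l = sum_over f l + sum_over g l.
Proof. induction l as [|a l IH]; simpl; lia. Qed.

Lemma sum_over_lower {V : Type} (f : V -> nat) l N :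
  (forall x, In x l -> N <= f x) -> N * length l <= sum_over f l.
Proof.
  induction l as [|a l IH]; simpl; intros H; [lia|].
  pose proof (H a (or_introl eq_refl)).
  pose proof (IH (fun x Hx => H x (or_intror Hx))). nia.
Qed.

Lemma sum_over_succ_bound {V : Type} (f g : V -> nat) l :
  (forall x, In x l -> f x <= S (g x)) -> sum_over f l <= sum_over g l + length l.
Proof.
  induction l as [|a l IH]; simpl; intros H; [lia|].
  pose proof (H a (or_introl eq_refl)).
  pose proof (IH (fun x Hx => H x (or_intror Hx))). lia.
Qed.

Lemma sum_over_succ_bound_strict {V : Type} (f g : V -> nat) l :
  (forall x, In x l -> f x <= S (g x)) -> (exists x, In x l /\ f x <= g x) ->
  sum_over f l < sum_over g l + length l.
Proof.
  induction l as [|a l IH]; simpl; intros H [x [Hx Hfx]]; [destruct Hx|].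
  pose proof (H a (or_introl eq_refl)) as Ha.
  assert (Hl : forall y, In y l -> f y <= S (g y)) by (intros y Hy; apply H; auto).
  destruct Hx as [<- | Hx].
  - pose proof (@sum_over_succ_bound _ f g l Hl). lia.
  - pose proof (IH Hl (ex_intro _ x (conj Hx Hfx))). lia.
Qed.

Section RecedingEdge.
Variable V : Type.
Variable adj : V -> V -> Prop.
Hypothesis sym : forall u v, adj u v -> adj v u.
Hypothesis conn : connected adj.
Variable A : list V.

Definition receding (a1 a2 : V) : Prop :=
  adj a1 a2 /\ forall x, In x A -> gdist adj a1 x = S (gdist adj a2 x).

Definition potential (z : V) : nat := sum_over (gdist adj z) A.

(* Without receding edges, each step away from x0 along a geodesic raises the
   potential by less than |A|. *)
Lemma potential_growth (no_receding : forall a1 a2, ~ receding a1 a2) x0 N z :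
  gdist adj x0 z = N -> potential z + N <= potential x0 + N * length A.
Proof.
  revert z. induction N as [|N IH]; intros z Hz.
  - assert (Hx0 : x0 = z) by (apply (walk0_eq (adj := adj)); rewrite <- Hz; apply gdist_walk, conn).
    subst. lia.
  - destruct (geodesic_predecessor conn x0 z Hz) as [w [Hwz Hw]].
    assert (Hstep : potential z < potential w + length A).
    { apply sum_over_succ_bound_strict.
      - intros x _. exact (gdist_adj conn z w x (sym Hwz)).
      - apply NNPP. intros Hno. apply (no_receding z w). split; [exact (sym Hwz)|].
        intros x Hx. pose proof (gdist_adj conn z w x (sym Hwz)).
        destruct (Nat.eq_dec (gdist adj z x) (S (gdist adj w x))) as [|Hne]; [assumption|].
        exfalso. apply Hno. exists x. split; [exact Hx | lia]. }
    specialize (IH w Hw). nia.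
Qed.

(* Conversely the triangle inequality bounds the potential from below. *)
Lemma potential_lower x0 z : gdist adj x0 z * length A <= potential z + potential x0.
Proof.
  unfold potential. rewrite <- sum_over_add. apply sum_over_lower.
  intros x _. pose proof (gdist_triangle conn x0 x z).
  rewrite (gdist_sym conn sym x z) in *. lia.
Qed.

Lemma receding_edge_exists (inf : infinite_graph V) (lf : locally_finite adj) :
  exists a1 a2, receding a1 a2.
Proof.
  apply NNPP. intros Hno.
  assert (no_receding : forall a1 a2, ~ receding a1 a2) by eauto.
  destruct (inf []) as [x0 _].
  destruct (far_vertex lf inf conn x0 (2 * potential x0)) as [z Hz].
  pose proof (potential_growth no_receding x0 z eq_refl).
  pose proof (potential_lower x0 z). nia.
Qed.

End RecedingEdge.

Section Product.
Variables V W : Type.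
Variable adjG : V -> V -> Prop.
Variable adjH : W -> W -> Prop.

Lemma walk_box_l n a x b :
  walk adjG n a x -> walk (box adjG adjH) n (a, b) (x, b).
Proof. induction 1; [constructor | eapply walkS; eauto; right; simpl; auto]. Qed.

Lemma walk_box_r n a b y :
  walk adjH n b y -> walk (box adjG adjH) n (a, b) (a, y).
Proof. induction 1; [constructor | eapply walkS; eauto; left; simpl; auto]. Qed.

Lemma walk_box_proj n p q :
  walk (box adjG adjH) n p q ->
  exists m1 m2, m1 + m2 = n /\ walk adjG m1 (fst p) (fst q) /\ walk adjH m2 (snd p) (snd q).
Proof.
  induction 1 as [|n u w v Huw _ [m1 [m2 [Hm [H1 H2]]]]].
  - exists 0, 0. repeat split; constructor.
  - destruct Huw as [[He Ha] | [He Ha]]; rewrite He.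
    + exists m1, (S m2). repeat split; [lia | assumption | eapply walkS; eauto].
    + exists (S m1), m2. repeat split; [lia | eapply walkS; eauto | assumption].
Qed.

Lemma dist_box (cG : connected adjG) (cH : connected adjH) a b x y :
  dist (box adjG adjH) (a, b) (x, y) (gdist adjG a x + gdist adjH b y).
Proof.
  split.
  - eapply walk_app; [apply walk_box_l | apply walk_box_r]; apply gdist_walk; assumption.
  - intros m Hm. destruct (walk_box_proj Hm) as [m1 [m2 [<- [H1 H2]]]].
    simpl in *. pose proof (gdist_le cG H1). pose proof (gdist_le cH H2). lia.
Qed.

End Product.

Theorem corollary2 (V W : Type) (adjG : V -> V -> Prop) (adjH : W -> W -> Prop) :
  simple_graph adjG -> simple_graph adjH ->
  infinite_graph V -> infinite_graph W ->
  connected adjG -> connected adjH ->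
  locally_finite adjG -> locally_finite adjH ->
  metric_dim_infinite (box adjG adjH).
Proof.
  intros [symG irrG] [symH _] iG iH cG cH lG lH S HS.
  destruct (receding_edge_exists symG cG (map fst S) iG lG) as [a1 [a2 [Ha HaS]]].
  destruct (receding_edge_exists symH cH (map snd S) iH lH) as [b1 [b2 [_ HbS]]].
  destruct (HS (a1, b2) (a2, b1)) as [[x y] [Hin Hres]].
  - intros E. injection E as <- _. exact (irrG a1 Ha).
  - (* (a1,b2) and (a2,b1) are both at distance d(a2,x) + d(b2,y) + 1 from (x,y). *)
    apply Hres. exists (gdist adjG a1 x + gdist adjH b2 y). split.
    + apply dist_box; assumption.
    + rewrite (HaS x (in_map fst _ _ Hin)), Nat.add_succ_comm.
      rewrite <- (HbS y (in_map snd _ _ Hin)). apply dist_box; assumption.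
Qed.
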